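(* Let $\pi$ be a uniformly $\rho$-robust, cost-invariant oracle for an objective $\boldsymbol{\mathcal{G}}$ with mistake constant $M^\pi_\rho$. Let $(\boldsymbol{x},\boldsymbol{u})$ be a trajectory and $\mathcal{I}=[t_1,t_2]$ a time interval such that the restriction $(x_{\mathcal{I}},u_{\mathcal{I}})$ belongs to $\bigcup_{\theta\in\mathsf{K}}\mathcal{S}_{\mathcal{I}}[\rho;\theta]$. Then: (i) if $s\in\mathcal{I}$, $s<t_2$, and $\mathcal{G}_s(x_s,u_s)=0$, then $\mathcal{G}_{s+1}(x_{s+1},u_{s+1})=0$; (ii) $\mathcal{G}_s(x_s,u_s)=0$ for all $s$ with $t_1+M^\pi_\rho\le s\le t_2$; (iii) if $\mathcal{G}_{t_1}(x_{t_1},u_{t_1})=0$ then $\sum_{t\in\mathcal{I}}\mathcal{G}_t(x_t,u_t)=0$; (iv) if $\mathcal{G}_{t_2}(x_{t_2},u_{t_2})=1$ then $|\mathcal{I}|\le M^\pi_\rho$.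
   Context: $\mathcal{X}$ (normed) and $\mathcal{U}$ are sets; $\mathcal{F}$ is a set of functions $\mathbb{N}\times\mathcal{X}\times\mathcal{U}\to\mathcal{X}$ with compact parametrization $(\mathbb{T},\mathsf{K},d)$: $(\mathsf{K},d)$ compact metric, $\mathbb{T}:\mathsf{K}\to2^{\mathcal{F}}$, $\mathcal{F}\subseteq\bigcup_\theta\mathbb{T}[\theta]$. An objective is a sequence $\mathcal{G}_t:\mathcal{X}\times\mathcal{U}\to\{0,1\}$; $\pi:\mathsf{K}\to\mathcal{C}$ with $\mathcal{C}$ the maps $\mathbb{N}\times\mathcal{X}\to\mathcal{U}$. For $\mathcal{I}=[t_1,t_2]$, $\theta\in\mathsf{K}$: $\mathcal{S}_{\mathcal{I}}[\rho;\theta]$ is the set of pairs $(x_{t_1..t_2}),(u_{t_1..t_2})$ for which there exist $f\in\mathbb{T}[\theta]$ and $\theta_k$ with $d(\theta_k,\theta)\le\rho$ such that $u_k=\pi[\theta_k](k,x_k)$ ($k\in\mathcal{I}$) and $x_{k+1}=f(k,x_k,u_k)$ ($k<t_2$). $m^\pi_\rho(\gamma;\theta)=\sup_{\mathcal{I}=[t,t'],t<t'}\sup\{\sum_{s\in\mathcal{I}}\mathcal{G}_s(x_s,u_s):(x_{\mathcal{I}},u_{\mathcal{I}})\in\mathcal{S}_{\mathcal{I}}[\rho;\theta],\|x_t\|\le\gamma\}$; $\pi$ is an oracle if $m^\pi_0<\infty$ everywhere, uniformly $\rho$-robust if $M^\pi_\rho:=\sup_{\gamma,\theta}m^\pi_\rho(\gamma;\theta)<\infty$.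 With $\mathsf{X}_t=\{x:\exists u,\mathcal{G}_t(x,u)=0\}$, cost invariance means: for all $\theta\in\mathsf{K},t\ge0$, $\mathcal{G}_t(x,\pi[\theta](t,x))=0$ for $x\in\mathsf{X}_t$, and $f(t,x,\pi[\theta'](t,x))\in\mathsf{X}_{t+1}$ for $x\in\mathsf{X}_t$, $f\in\mathbb{T}[\theta]$, $d(\theta',\theta)\le\rho$. *)

From HB Require Import structures.
From mathcomp Require Import all_boot all_order all_algebra.
From mathcomp Require Import all_classical all_reals all_analysis.
Set Implicit Arguments. Unset Strict Implicit. Unset Printing Implicit Defensive.
Import Order.TTheory GRing.Theory Num.Theory.
Import numFieldNormedType.Exports.
Local Open Scope classical_set_scope.
Local Open Scope ring_scope.

Section Defs.
Context {R : realType} {X : normedModType R} {U K : Type}.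

Definition is_metric (d : K -> K -> R) : Prop :=
  [/\ (forall a b, 0 <= d a b),
      (forall a b, d a b = 0 <-> a = b),
      (forall a b, d a b = d b a) &
      (forall a b c, d a c <= d a b + d b c)].

Definition metric_compact (d : K -> K -> R) : Prop :=
  forall s : nat -> K, exists (phi : nat -> nat) (l : K),
    (forall n, (phi n < phi n.+1)%N) /\
    (forall e : R, 0 < e -> exists N, forall n, (N <= n)%N -> d (s (phi n)) l < e).

Definition compact_parametrization (F : set (nat -> X -> U -> X))
  (T : K -> set (nat -> X -> U -> X)) (d : K -> K -> R) : Prop :=
  [/\ is_metric d, metric_compact d &
      F `<=` \bigcup_(th in [set: K]) T th].

Definition in_S (T : K -> set (nat -> X -> U -> X)) (d : K -> K -> R)
  (pi : K -> nat -> X -> U) (rho : R) (t1 t2 : nat) (th : K)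
  (x : nat -> X) (u : nat -> U) : Prop :=
  exists (f : nat -> X -> U -> X) (ths : nat -> K),
    [/\ T th f,
        (forall k, (t1 <= k <= t2)%N -> d (ths k) th <= rho),
        (forall k, (t1 <= k <= t2)%N -> u k = pi (ths k) k (x k)) &
        (forall k, (t1 <= k < t2)%N -> x k.+1 = f k (x k) (u k))].

Definition cost (G : nat -> X -> U -> bool) (x : nat -> X) (u : nat -> U)
  (t1 t2 : nat) : nat :=
  (\sum_(t1 <= s < t2.+1) (G s (x s) (u s) : nat))%N.

Definition mistake_fn (T : K -> set (nat -> X -> U -> X)) (d : K -> K -> R)
  (pi : K -> nat -> X -> U) (G : nat -> X -> U -> bool) (rho gamma : R) (th : K)
  : \bar R :=
  ereal_sup [set r | exists (t t' : nat) (x : nat -> X) (u : nat -> U),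
     [/\ (t < t')%N, in_S T d pi rho t t' th x u, `|x t| <= gamma &
          r = ((cost G x u t t')%:R)%:E]].

Definition mistake_const (T : K -> set (nat -> X -> U -> X)) (d : K -> K -> R)
  (pi : K -> nat -> X -> U) (G : nat -> X -> U -> bool) (rho : R) : \bar R :=
  ereal_sup [set r | exists (gamma : R) (th : K), r = mistake_fn T d pi G rho gamma th].

Definition is_oracle T d pi G : Prop :=
  forall gamma th, (mistake_fn T d pi G 0 gamma th < +oo)%E.

Definition unif_robust T d pi G rho : Prop :=
  (mistake_const T d pi G rho < +oo)%E.

Definition Xset (G : nat -> X -> U -> bool) (t : nat) : set X :=
  [set x | exists v, G t x v = false].

Definition cost_invariant (T : K -> set (nat -> X -> U -> X)) (d : K -> K -> R)
  (pi : K -> nat -> X -> U) (G : nat -> X -> U -> bool) (rho : R) : Prop :=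
  forall th t,
    (forall x, Xset G t x -> G t x (pi th t x) = false) /\
    (forall x f th', Xset G t x -> T th f -> d th' th <= rho ->
        Xset G t.+1 (f t x (pi th' t x))).

End Defs.

From HB Require Import structures.
From mathcomp Require Import all_boot all_order all_algebra.
From mathcomp Require Import all_classical all_reals all_analysis.
Set Implicit Arguments. Unset Strict Implicit. Unset Printing Implicit Defensive.
Import Order.TTheory GRing.Theory Num.Theory.
Import numFieldNormedType.Exports.
Local Open Scope classical_set_scope.
Local Open Scope ring_scope.

(* Cost invariance makes the zero-cost times of an admissible trajectory
   closed under successors.  Hence a mistake at time t forces a mistake at
   every time of [t1, t], so the cost over [t1, t] is its length t - t1 + 1.
   That cost is at most M, because the window, extended by one step to a
   nondegenerate interval, competes in the supremum defining M. *)

Section AdmissibleWindows.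
Variables (R : realType) (X : normedModType R) (U K : Type).
Variables (T : K -> set (nat -> X -> U -> X)) (d : K -> K -> R).
Variables (pi : K -> nat -> X -> U) (rho : R).

Lemma cost_le_succ (G : nat -> X -> U -> bool) x u t1 t2 :
  (t1 <= t2.+1)%N -> (cost G x u t1 t2 <= cost G x u t1 t2.+1)%N.
Proof. by move=> le12; rewrite /cost (big_nat_recr t2.+1) //= leq_addr. Qed.

Lemma eq_cost (G : nat -> X -> U -> bool) x u x' u' t1 t2 :
  (forall k, (k <= t2)%N -> x' k = x k /\ u' k = u k) ->
  cost G x' u' t1 t2 = cost G x u t1 t2.
Proof. by move=> agree; apply: eq_big_nat => k /andP[_ /agree[-> ->]]. Qed.

Local Notation in_S := (in_S T d pi rho).

Lemma in_S_sub t1 t2 t1' t2' th x u : (t1 <= t1')%N -> (t2' <= t2)%N ->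
  in_S t1 t2 th x u -> in_S t1' t2' th x u.
Proof.
move=> le1 le2 [f [ths [Tf Hd Hu Hx]]]; exists f, ths.
have sub k : (t1' <= k <= t2')%N -> (t1 <= k <= t2)%N.
  by case/andP=> a b; rewrite (leq_trans le1 a) (leq_trans b le2).
split=> // k; first by move/sub/Hd.
- by move/sub/Hu.
- case/andP=> a b; apply: Hx.
  by rewrite (leq_trans le1 a) (leq_trans b le2).
Qed.

Lemma in_S_extend t1 t2 th x u : (t1 <= t2)%N -> in_S t1 t2 th x u ->
  exists x' u', in_S t1 t2.+1 th x' u' /\
    (forall k, (k <= t2)%N -> x' k = x k /\ u' k = u k).
Proof.
move=> le12 [f [ths [Tf Hd Hu Hx]]].
pose x' k := if k == t2.+1 then f t2 (x t2) (u t2) else x k.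
pose ths' k := if k == t2.+1 then ths t2 else ths k.
pose u' k := if k == t2.+1 then pi (ths t2) k (f t2 (x t2) (u t2)) else u k.
have old k : (k <= t2)%N -> (k == t2.+1) = false by rewrite -ltnS; exact: ltn_eqF.
have within k : (k <= t2.+1)%N -> k != t2.+1 -> (k <= t2)%N.
  by move=> le ne; rewrite -ltnS ltn_neqAle ne.
exists x', u'; split; last by move=> k /old; rewrite /x' /u' => ->.
exists f, ths'; split=> // k /andP[a b]; rewrite /x' /u' /ths'.
- by case: eqP => [_|/eqP /(within _ b) le]; apply: Hd; rewrite ?le12 ?a ?leqnn.
- by case: eqP => [//|/eqP /(within _ b) le]; apply: Hu; rewrite a.
- rewrite (old k b) eqSS; case: eqP => [-> //|/eqP ne].
  by apply: Hx; rewrite a ltn_neqAle ne.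
Qed.

Lemma cost_le_mistake_const G t1 t2 th x u : (t1 <= t2)%N ->
  in_S t1 t2 th x u -> ((cost G x u t1 t2)%:R%:E <= mistake_const T d pi G rho)%E.
Proof.
move=> le12 /(in_S_extend le12) [x' [u' [HS' agree]]].
apply: (@le_trans _ _ (cost G x' u' t1 t2.+1)%:R%:E).
  by rewrite lee_fin ler_nat -(eq_cost G t1 agree) cost_le_succ // ltnW.
apply: (@le_trans _ _ (mistake_fn T d pi G rho `|x' t1| th)).
  by apply: ereal_sup_ubound; exists t1, t2.+1, x', u'; split; [exact: le12|exact: HS'| |].
by apply: ereal_sup_ubound; exists `|x' t1|, th.
Qed.

Variables (G : nat -> X -> U -> bool).
Hypothesis invG : cost_invariant T d pi G rho.

Lemma cost_invariant_step t1 t2 th x u s : in_S t1 t2 th x u ->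
  (t1 <= s < t2)%N -> G s (x s) (u s) = false -> G s.+1 (x s.+1) (u s.+1) = false.
Proof.
move=> [f [ths [Tf Hd Hu Hx]]] /andP[a b] Gs.
have Xs : Xset G s (x s) by exists (u s).
have sI : (t1 <= s <= t2)%N by rewrite a ltnW.
have s1I : (t1 <= s.+1 <= t2)%N by rewrite b andbT; exact: leqW.
have Xs1 : Xset G s.+1 (x s.+1).
  rewrite (Hx s) ?a // (Hu s sI).
  exact: (proj2 (invG th s)) _ _ _ Xs Tf (Hd s sI).
by rewrite (Hu _ s1I); apply: (proj1 (invG _ _)).
Qed.

Lemma cost_invariant_forward t1 t2 th x u s t : in_S t1 t2 th x u ->
  (t1 <= s)%N -> (s <= t <= t2)%N ->
  G s (x s) (u s) = false -> G t (x t) (u t) = false.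
Proof.
move=> HS t1s; elim: t => [|t IH] /andP[st tt2] Gs.
  by move: st Gs; rewrite leqn0 => /eqP ->.
move: st; rewrite leq_eqVlt ltnS => /orP[/eqP <- //|st].
have Gt : G t (x t) (u t) = false by apply: IH Gs; rewrite st (ltnW tt2).
by apply: (cost_invariant_step HS) Gt; rewrite (leq_trans t1s st) tt2.
Qed.

Lemma cost_eq0_of_initial_success t1 t2 th x u : in_S t1 t2 th x u ->
  G t1 (x t1) (u t1) = false -> cost G x u t1 t2 = 0%N.
Proof.
move=> HS G1; rewrite /cost big_nat_cond big1 // => s /andP[/andP[t1s st2] _].
by rewrite (cost_invariant_forward HS (leqnn t1) _ G1) // t1s.
Qed.

Lemma cost_upto_mistake t1 t2 th x u t : in_S t1 t2 th x u ->
  (t1 <= t <= t2)%N -> G t (x t) (u t) = true -> cost G x u t1 t = (t - t1).+1.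
Proof.
move=> HS /andP[t1t tt2] Gt.
rewrite /cost -(@eq_big_nat _ _ _ _ _ (fun _ => 1%N)).
  by rewrite sum_nat_const_nat muln1 subSn.
move=> s /andP[t1s]; rewrite ltnS => st; case Gs: (G s (x s) (u s)) => //.
suff : G t (x t) (u t) = false by rewrite Gt.
by apply: (cost_invariant_forward HS t1s) Gs; rewrite st tt2.
Qed.

Lemma mistake_duration_le t1 t2 th x u t : in_S t1 t2 th x u ->
  (t1 <= t <= t2)%N -> G t (x t) (u t) = true ->
  ((t - t1).+1%:R%:E <= mistake_const T d pi G rho)%E.
Proof.
move=> HS /andP[t1t tt2] Gt; rewrite -(cost_upto_mistake HS _ Gt) ?t1t //.
exact/cost_le_mistake_const/(in_S_sub (leqnn t1) tt2 HS).
Qed.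

Lemma no_mistake_after t1 t2 th x u s : (t1 <= t2)%N -> in_S t1 t2 th x u ->
  (t1%:R%:E + mistake_const T d pi G rho <= s%:R%:E)%E -> (s <= t2)%N ->
  G s (x s) (u s) = false.
Proof.
move=> le12 HS tM st2; case Gs: (G s (x s) (u s)) => //.
have M0 : (0 <= mistake_const T d pi G rho)%E.
  by apply: le_trans (cost_le_mistake_const G le12 HS); rewrite lee_fin.
have t1s : (t1 <= s)%N.
  by rewrite -(ler_nat R) -lee_fin (le_trans (leeDl _ M0) tM).
have := mistake_duration_le HS (t := s); rewrite t1s st2 => /(_ isT Gs).
move=> /(leeD2l t1%:R%:E) /le_trans /(_ tM).
by rewrite -EFinD lee_fin -natrD addnS subnKC // ler_nat ltnn.
Qed.

End AdmissibleWindows.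

Theorem mainTheorem12 (R : realType) (X : normedModType R) (U K : Type)
  (F : set (nat -> X -> U -> X)) (T : K -> set (nat -> X -> U -> X))
  (d : K -> K -> R) (G : nat -> X -> U -> bool) (pi : K -> nat -> X -> U)
  (rho : R) :
  compact_parametrization F T d ->
  is_oracle T d pi G ->
  unif_robust T d pi G rho ->
  cost_invariant T d pi G rho ->
  forall (x : nat -> X) (u : nat -> U) (t1 t2 : nat),
  (t1 <= t2)%N ->
  (exists th : K, in_S T d pi rho t1 t2 th x u) ->
  [/\ (forall s, (t1 <= s < t2)%N -> G s (x s) (u s) = false ->
          G s.+1 (x s.+1) (u s.+1) = false),
      (forall s, (t1%:R%:E + mistake_const T d pi G rho <= s%:R%:E)%E ->
          (s <= t2)%N -> G s (x s) (u s) = false),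
      (G t1 (x t1) (u t1) = false -> cost G x u t1 t2 = 0%N) &
      (G t2 (x t2) (u t2) = true ->
          ((t2 - t1).+1%:R%:E <= mistake_const T d pi G rho)%E)].
Proof.
move=> _ _ _ invG x u t1 t2 le12 [th HS]; split.
- by move=> s; exact: (cost_invariant_step invG HS).
- by move=> s; exact: (no_mistake_after invG le12 HS).
- exact: (cost_eq0_of_initial_success invG HS).
- by move=> Gt; apply: (mistake_duration_le invG HS _ Gt); rewrite le12 leqnn.
Qed.
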